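(* For each $2p\in\{50, 98, 170, 242, 290, 338\}$ there exists a cyclic DCA$(4,2p+1;2p)$ satisfying P1 and P2.
   Context: A difference covering array DCA$(k,\eta;n)$ over $\mathbb{Z}_n$ (a cyclic DCA) is an $\eta\times k$ matrix $Q=[q(i,j)]$ with entries in $\mathbb{Z}_n$ such that for every pair of distinct columns $j,j'$ the multiset $\{q(i,j)-q(i,j') : 0\le i\le \eta-1\}$ contains every element of $\mathbb{Z}_n$ at least once. A DCA$(k,n+1;n)$ is taken in normalized form: all entries of its last row (row $n$) and last column (column $k-1$) equal $0$. It satisfies P1 if $0$ occurs at least twice in every column, and P2 if for all distinct columns $j,j'$ with $j\neq k-1\neq j'$, the set $\{q(i,j)-q(i,j') : 0\le i\le n-1\}$ equals $\mathbb{Z}_n\setminus\{0\}$. *)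

From mathcomp Require Import all_boot all_algebra.
Set Implicit Arguments. Unset Strict Implicit. Unset Printing Implicit Defensive.
Import GRing.Theory.
Local Open Scope ring_scope.

(* A DCA(k, eta; n) over Z_n: an eta x k matrix with entries in 'Z_n
   (used only with 1 < n). *)
Definition is_DCA (n eta k : nat) (Q : 'M['Z_n]_(eta, k)) : Prop :=
  forall j j' : 'I_k, j != j' ->
    forall x : 'Z_n, exists i : 'I_eta, Q i j - Q i j' = x.

Definition normalized_DCA (n k : nat) (Q : 'M['Z_n]_(n.+1, k.+1)) : Prop :=
  (forall j, Q ord_max j = 0) /\ (forall i, Q i ord_max = 0).

Definition DCA_P1 (n eta k : nat) (Q : 'M['Z_n]_(eta, k)) : Prop :=
  forall j : 'I_k, (2 <= #|[set i : 'I_eta | Q i j == 0%R]|)%N.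

Definition DCA_P2 (n k : nat) (Q : 'M['Z_n]_(n.+1, k.+1)) : Prop :=
  forall j j' : 'I_k.+1, j != j' -> j != ord_max -> j' != ord_max ->
    [set Q i j - Q i j' | i : 'I_n.+1 & (val i < n)%N] = [set~ 0].

From mathcomp Require Import all_boot all_algebra.
Import GRing.Theory.

(* Three permutations s_0, s_1, s_2 of Z_n such that, for a != b, the
   differences s_a(i) - s_b(i), i < n, are never 0 and hit every nonzero
   residue, give the first three columns of the DCA; a zero column and a
   zero row complete it.  The zero row supplies the difference 0, the zero
   column turns every difference against it into a value of a permutation,
   and the zero row together with the zero of each permutation gives P1.
   For the six values of n such permutations were found by computer search;
   they are verified by computation. *)

Lemma ltn_ord_max m (j : 'I_m.+1) : (j < m) = (j != ord_max).
Proof. by rewrite -val_eqE /= ltn_neqAle -ltnS ltn_ord andbT. Qed.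

Lemma geq_ord_max m (j : 'I_m.+1) : (m <= j) = (j == ord_max).
Proof. by rewrite leqNgt ltn_ord_max negbK. Qed.

Section DCAOfColumns.
Variables (n k : nat) (c : nat -> nat -> 'Z_n).
Hypothesis n_gt0 : 0 < n.
Hypothesis column_onto : forall [j] y, j < k -> exists2 i, i < n & c j i = y.
Hypothesis column_diff_neq0 : forall [j j'] i,
  j < k -> j' < k -> j != j' -> i < n -> (c j i - c j' i != 0)%R.
Hypothesis column_diff_onto : forall [j j'] y,
  j < k -> j' < k -> j != j' -> y != 0%R -> exists2 i, i < n & (c j i - c j' i)%R = y.

Definition dca_of_columns : 'M['Z_n]_(n.+1, k.+1) :=
  \matrix_(i, j) if (i < n) && (j < k) then c j i else 0%R.
Local Notation Q := dca_of_columns.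

Lemma dca_of_columns_last_row j : Q ord_max j = 0%R.
Proof. by rewrite mxE ltnn. Qed.

Lemma dca_of_columns_last_col i : Q i ord_max = 0%R.
Proof. by rewrite mxE ltnn andbF. Qed.

Lemma dca_of_columns_inner (i : 'I_n.+1) (j : 'I_k.+1) :
  i < n -> j < k -> Q i j = c j i.
Proof. by move=> lt_in lt_jk; rewrite mxE lt_in lt_jk. Qed.

Lemma dca_of_columns_normalized : normalized_DCA Q.
Proof.
by split; [exact: dca_of_columns_last_row | exact: dca_of_columns_last_col].
Qed.

Lemma dca_of_columns_P1 : DCA_P1 Q.
Proof.
move=> j; apply/card_gt1P.
have [i0 lt_i0n Qi0] : exists2 i0 : 'I_n.+1, i0 < n & Q i0 j = 0%R.
  have [lt_jk | ] := ltnP j k.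
    have [i lt_in ci] := column_onto 0%R lt_jk.
    by exists (Ordinal (leqW lt_in)); rewrite ?dca_of_columns_inner.
  rewrite geq_ord_max => /eqP ->.
  by exists ord0; rewrite ?dca_of_columns_last_col.
exists i0, ord_max; rewrite !inE Qi0 dca_of_columns_last_row eqxx.
by rewrite -ltn_ord_max.
Qed.

Lemma dca_of_columns_P2 : DCA_P2 Q.
Proof.
move=> j j' neq_jj'; rewrite -!ltn_ord_max => lt_jk lt_j'k.
have neq_jj'_nat : nat_of_ord j != j' by [].
apply/setP => x; rewrite !inE; apply/imsetP/idP.
  move=> [i]; rewrite inE => lt_in ->.
  by rewrite !dca_of_columns_inner // column_diff_neq0.
move=> /(column_diff_onto _ lt_jk lt_j'k neq_jj'_nat) [i lt_in <-].
by exists (Ordinal (leqW lt_in)); rewrite ?inE ?dca_of_columns_inner.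
Qed.

Lemma dca_of_columns_is_DCA : is_DCA Q.
Proof.
move=> j j' neq_jj' x.
have [lt_jk | ] := ltnP j k; have [lt_j'k | ] := ltnP j' k.
- have [-> | x_neq0] := eqVneq x 0%R.
    by exists ord_max; rewrite !dca_of_columns_last_row subr0.
  have [i lt_in <-] := column_diff_onto _ lt_jk lt_j'k neq_jj' x_neq0.
  by exists (Ordinal (leqW lt_in)); rewrite !dca_of_columns_inner.
- rewrite geq_ord_max => /eqP ->.
  have [i lt_in <-] := column_onto x lt_jk.
  exists (Ordinal (leqW lt_in)).
  by rewrite dca_of_columns_inner // dca_of_columns_last_col subr0.
- rewrite geq_ord_max => /eqP ->.
  have [i lt_in ci] := column_onto (- x)%R lt_j'k.
  exists (Ordinal (leqW lt_in)).
  by rewrite dca_of_columns_last_col dca_of_columns_inner // ci sub0r opprK.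
- rewrite !geq_ord_max => /eqP j'_max /eqP j_max.
  by move: neq_jj'; rewrite j_max j'_max eqxx.
Qed.

End DCAOfColumns.

(* Adding n first avoids truncated subtraction. *)
Definition diffs_mod n (s t : seq nat) : seq nat :=
  [seq (x.1 + n - x.2) %% n | x <- zip s t].

Definition nonzero_mod_cover n (d : seq nat) : bool :=
  (0 \notin d) && all (fun x => x \in d) (iota 1 n.-1).

Definition difference_columns n (cols : seq (seq nat)) : bool :=
  all (fun s => perm_eq s (iota 0 n)) cols &&
  all (fun j => all (fun j' => (j == j') ||
         nonzero_mod_cover n (diffs_mod n (nth [::] cols j) (nth [::] cols j')))
       (iota 0 (size cols)))
      (iota 0 (size cols)).

Lemma nth_diffs_mod n s t i : size s = n -> size t = n -> i < n ->
  nth 0 (diffs_mod n s t) i = (nth 0 s i + n - nth 0 t i) %% n.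
Proof.
move=> size_s size_t lt_in.
by rewrite (nth_map (0, 0)) ?nth_zip ?size_zip ?size_s ?size_t ?minnn.
Qed.

Section DifferenceColumns.
Variables (n k : nat) (cols : seq (seq nat)).
Hypotheses (n_gt1 : 1 < n) (size_cols : size cols = k).
Hypothesis cols_ok : difference_columns n cols.

Local Notation col j := (nth [::] cols j).
Let entry j i : 'Z_n := ((nth 0%N (col j) i)%:R)%R.

Lemma perm_col [j] : j < k -> perm_eq (col j) (iota 0 n).
Proof.
move=> lt_jk; case/andP: cols_ok => /allP perm_cols _.
by apply: perm_cols; rewrite mem_nth ?size_cols.
Qed.

Lemma size_col [j] : j < k -> size (col j) = n.
Proof. by move/perm_col/perm_size; rewrite size_iota. Qed.

Lemma col_cover [j j'] : j < k -> j' < k -> j != j' ->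
  nonzero_mod_cover n (diffs_mod n (col j) (col j')).
Proof.
move=> lt_jk lt_j'k neq_jj'; case/andP: cols_ok => _ /allP/(_ j).
rewrite mem_iota add0n size_cols lt_jk => /(_ isT)/allP/(_ j').
by rewrite mem_iota add0n lt_j'k (negbTE neq_jj') => /(_ isT).
Qed.

Lemma nth_col_lt [j i] : j < k -> i < n -> nth 0 (col j) i < n.
Proof.
move=> lt_jk lt_in.
have : nth 0 (col j) i \in iota 0 n.
  by rewrite -(perm_mem (perm_col lt_jk)) mem_nth ?size_col.
by rewrite mem_iota.
Qed.

Lemma val_Zp_lt (y : 'Z_n) : y < n.
Proof. by rewrite -[X in _ < X](Zp_cast n_gt1) ltn_ord. Qed.

Lemma entry_onto j y : j < k -> exists2 i, i < n & entry j i = y.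
Proof.
move=> lt_jk; have y_in : (y : nat) \in col j.
  by rewrite (perm_mem (perm_col lt_jk)) mem_iota val_Zp_lt.
exists (index (y : nat) (col j)); first by move: y_in; rewrite -index_mem size_col.
by apply: ord_inj; rewrite /entry nth_index // val_Zp_nat // modn_small ?val_Zp_lt.
Qed.

Lemma val_entry_sub j j' i : j < k -> j' < k -> i < n ->
  nat_of_ord (entry j i - entry j' i)%R = nth 0 (diffs_mod n (col j) (col j')) i.
Proof.
move=> lt_jk lt_j'k lt_in.
rewrite nth_diffs_mod ?size_col // -val_Zp_nat // natrB; last first.
  exact: leq_trans (ltnW (nth_col_lt lt_j'k lt_in)) (leq_addl _ _).
by rewrite natrD pchar_Zp // addr0.
Qed.

Lemma entry_diff_neq0 j j' i : j < k -> j' < k -> j != j' -> i < n ->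
  (entry j i - entry j' i != 0)%R.
Proof.
move=> lt_jk lt_j'k neq_jj' lt_in; apply: contraTneq (col_cover lt_jk lt_j'k neq_jj').
move=> /(congr1 (@nat_of_ord _)); rewrite val_entry_sub // => diff0.
rewrite negb_and negbK -[X in X \in _]/(nat_of_ord (0%R : 'Z_n)) -diff0.
by rewrite mem_nth // size_map size_zip !size_col ?minnn.
Qed.

Lemma entry_diff_onto j j' y : j < k -> j' < k -> j != j' -> y != 0%R ->
  exists2 i, i < n & (entry j i - entry j' i)%R = y.
Proof.
move=> lt_jk lt_j'k neq_jj' y_neq0.
set d := diffs_mod n (col j) (col j').
have size_d : size d = n by rewrite size_map size_zip !size_col ?minnn.
have y_in : (y : nat) \in d.
  case/andP: (col_cover lt_jk lt_j'k neq_jj') => _ /allP cover; apply: cover.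
  rewrite mem_iota add1n prednK ?(ltnW n_gt1) // val_Zp_lt andbT lt0n.
  by apply: contra y_neq0 => /eqP y0; apply/eqP/ord_inj.
have lt_index : index (y : nat) d < n by move: y_in; rewrite -index_mem size_d.
by exists (index (y : nat) d); last apply: ord_inj; rewrite ?val_entry_sub ?nth_index.
Qed.

Lemma difference_columns_DCA :
  exists Q : 'M['Z_n]_(n.+1, k.+1),
    is_DCA Q /\ normalized_DCA Q /\ DCA_P1 Q /\ DCA_P2 Q.
Proof.
have n_gt0 : 0 < n by apply: ltnW.
exists (dca_of_columns n k entry); split; last split; last split.
- exact: dca_of_columns_is_DCA entry_onto entry_diff_onto.
- exact: dca_of_columns_normalized.
- exact: dca_of_columns_P1 n_gt0 entry_onto.
- exact: dca_of_columns_P2 entry_diff_neq0 entry_diff_onto.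
Qed.

End DifferenceColumns.

Definition columns50 : seq (seq nat) := [::
  [:: 6; 24; 37; 21; 43; 18; 49; 40; 5; 12; 36; 9; 42; 31; 48; 3; 29; 0; 10;
      22; 16; 44; 47; 41; 28; 38; 34; 35; 15; 32; 46; 4; 27; 26; 8; 23; 39;
      45; 20; 17; 1; 14; 7; 11; 13; 33; 19; 30; 25; 2];
  [:: 26; 5; 40; 38; 29; 46; 43; 4; 7; 37; 21; 20; 10; 3; 24; 11; 13; 19; 2;
      27; 41; 35; 30; 18; 44; 1; 33; 9; 22; 42; 36; 0; 25; 8; 14; 16; 28; 49;
      17; 32; 31; 15; 45; 23; 34; 6; 48; 39; 12; 47];
  [:: 20; 4; 32; 8; 44; 37; 31; 16; 18; 45; 30; 49; 17; 28; 29; 7; 41; 36; 3;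
      40; 15; 19; 2; 48; 39; 27; 26; 6; 38; 10; 25; 14; 12; 43; 24; 47; 11; 1;
      23; 5; 35; 34; 22; 13; 9; 42; 46; 21; 33; 0]].

Definition columns98 : seq (seq nat) := [::
  [:: 94; 48; 97; 56; 51; 64; 5; 72; 8; 31; 11; 88; 63; 96; 17; 6; 20; 14; 23;
      22; 26; 79; 78; 38; 81; 95; 35; 54; 87; 62; 41; 21; 93; 29; 47; 86; 50;
      45; 53; 4; 7; 12; 10; 69; 13; 28; 65; 36; 68; 44; 71; 3; 25; 60; 77; 19;
      80; 27; 34; 84; 37; 43; 40; 2; 92; 59; 46; 18; 49; 75; 52; 83; 55; 42;
      58; 1; 61; 9; 15; 66; 67; 74; 70; 82; 73; 90; 76; 0; 30; 57; 33; 16; 85;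
      24; 39; 32; 91; 89];
  [:: 80; 29; 79; 45; 78; 61; 28; 77; 27; 44; 75; 11; 74; 76; 73; 92; 72; 10;
      22; 26; 70; 42; 69; 9; 68; 25; 18; 90; 66; 57; 65; 24; 15; 89; 63; 56;
      62; 23; 12; 39; 60; 6; 59; 71; 58; 87; 8; 5; 7; 21; 55; 37; 54; 53; 4;
      20; 52; 36; 2; 3; 1; 19; 0; 35; 48; 51; 96; 67; 95; 83; 94; 50; 93; 17;
      43; 33; 91; 49; 41; 16; 40; 81; 88; 97; 38; 64; 86; 31; 85; 47; 84; 14;
      34; 30; 82; 46; 32; 13];
  [:: 58; 3; 18; 34; 27; 16; 85; 96; 94; 78; 54; 60; 14; 42; 23; 24; 81; 6;
      90; 86; 1; 68; 59; 50; 19; 32; 77; 63; 37; 45; 46; 76; 55; 9; 64; 89;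
      73; 22; 82; 53; 91; 84; 51; 66; 11; 97; 69; 30; 29; 12; 87; 43; 47; 74;
      7; 56; 65; 38; 25; 20; 83; 2; 92; 33; 52; 15; 61; 95; 70; 28; 79; 10;
      39; 41; 48; 72; 8; 5; 17; 36; 75; 67; 35; 49; 93; 31; 4; 13; 62; 44; 71;
      26; 80; 57; 40; 88; 0; 21]].

Definition columns170 : seq (seq nat) := [::
  [:: 90; 6; 29; 117; 138; 58; 77; 169; 16; 25; 125; 51; 149; 162; 3; 103;
      112; 129; 136; 155; 75; 11; 14; 37; 123; 63; 147; 89; 1; 30; 110; 141;
      134; 167; 158; 108; 12; 49; 36; 160; 145; 101; 84; 127; 23; 153; 47; 9;
      71; 35; 95; 61; 34; 87; 143; 28; 82; 139; 21; 80; 45; 106; 154; 132; 8;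
      73; 32; 99; 56; 40; 165; 151; 19; 7; 43; 118; 152; 59; 91; 85; 115; 111;
      54; 52; 163; 78; 102; 104; 126; 130; 150; 156; 4; 97; 113; 38; 137; 64;
      161; 5; 100; 116; 39; 57; 148; 168; 2; 24; 26; 135; 50; 76; 74; 17; 13;
      128; 122; 69; 146; 10; 0; 121; 109; 62; 48; 88; 157; 114; 96; 140; 120;
      81; 144; 107; 83; 133; 22; 159; 46; 15; 70; 41; 94; 67; 33; 93; 142;
      119; 166; 60; 105; 86; 44; 27; 68; 53; 92; 79; 31; 20; 55; 131; 164; 72;
      18; 98; 42; 124; 66; 65];
  [:: 156; 27; 114; 24; 157; 106; 115; 103; 73; 15; 116; 97; 74; 9; 32; 91;
      75; 88; 33; 85; 76; 82; 34; 79; 77; 161; 120; 158; 163; 155; 121; 67;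
      164; 149; 122; 61; 80; 58; 38; 140; 81; 137; 124; 134; 167; 46; 125;
      128; 168; 40; 41; 37; 84; 119; 127; 31; 0; 28; 43; 25; 1; 22; 44; 104;
      87; 16; 45; 98; 3; 95; 131; 92; 4; 89; 47; 86; 5; 83; 48; 165; 6; 162;
      49; 159; 7; 71; 50; 153; 8; 65; 136; 62; 94; 59; 52; 141; 10; 53; 138;
      135; 96; 132; 54; 129; 12; 126; 55; 123; 13; 35; 56; 117; 99; 29; 57;
      111; 100; 108; 143; 20; 101; 102; 144; 14; 17; 11; 60; 93; 18; 90; 146;
      2; 19; 169; 147; 166; 105; 78; 148; 160; 21; 72; 64; 154; 107; 151; 150;
      63; 23; 145; 66; 142; 109; 139; 152; 51; 110; 133; 68; 130; 26; 42; 69;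
      39; 112; 36; 70; 118; 113; 30];
  [:: 139; 101; 91; 134; 43; 82; 165; 115; 117; 63; 69; 96; 106; 129; 143; 77;
      95; 25; 132; 58; 84; 6; 36; 39; 158; 157; 110; 105; 147; 53; 14; 86; 51;
      34; 88; 152; 125; 15; 162; 48; 114; 81; 151; 29; 103; 62; 55; 10; 7;
      128; 44; 76; 166; 24; 118; 57; 70; 90; 107; 38; 59; 156; 11; 19; 133;
      52; 0; 85; 37; 33; 159; 66; 26; 99; 148; 47; 100; 80; 137; 113; 4; 61;
      41; 94; 78; 42; 30; 160; 67; 23; 104; 141; 56; 89; 8; 122; 45; 155; 167;
      18; 119; 136; 71; 169; 108; 32; 145; 65; 97; 13; 49; 131; 1; 164; 123;
      112; 75; 60; 27; 93; 64; 126; 16; 74; 138; 22; 5; 140; 127; 3; 79; 121;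
      116; 154; 153; 17; 20; 50; 142; 83; 9; 31; 46; 149; 168; 12; 120; 130;
      72; 163; 109; 111; 146; 144; 98; 92; 135; 40; 2; 73; 124; 21; 161; 54;
      28; 87; 150; 35; 102; 68]].

Definition columns242 : seq (seq nat) := [::
  [:: 8; 84; 144; 142; 38; 200; 53; 137; 68; 74; 83; 11; 98; 190; 234; 127; 7;
      185; 22; 1; 158; 180; 173; 238; 188; 54; 82; 112; 97; 49; 233; 107; 6;
      44; 21; 223; 36; 160; 172; 218; 187; 34; 202; 92; 217; 29; 111; 208; 5;
      145; 141; 203; 35; 19; 171; 198; 65; 135; 201; 193; 216; 9; 110; 67;
      125; 4; 140; 62; 155; 120; 170; 178; 64; 236; 79; 52; 215; 231; 230;
      168; 3; 105; 18; 42; 33; 100; 48; 37; 63; 95; 78; 153; 214; 211; 229;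
      148; 123; 85; 17; 143; 32; 80; 47; 138; 183; 75; 77; 133; 213; 70; 228;
      128; 122; 186; 16; 2; 152; 181; 46; 118; 61; 55; 76; 113; 91; 50; 106;
      108; 0; 166; 136; 224; 30; 40; 45; 219; 60; 156; 196; 93; 90; 151; 226;
      209; 241; 25; 14; 204; 150; 20; 165; 199; 59; 15; 195; 194; 89; 131;
      104; 189; 240; 126; 134; 184; 149; 121; 164; 58; 179; 237; 73; 174; 88;
      232; 103; 169; 239; 227; 12; 43; 27; 222; 163; 159; 57; 96; 72; 154; 87;
      212; 102; 28; 117; 86; 132; 23; 26; 81; 41; 139; 56; 197; 71; 13; 207;
      192; 101; 129; 116; 66; 10; 124; 146; 182; 161; 119; 176; 177; 191; 235;
      206; 51; 221; 109; 115; 167; 130; 225; 24; 162; 39; 99; 175; 157; 69;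
      94; 205; 31; 220; 210; 114; 147];
  [:: 207; 209; 140; 13; 73; 180; 6; 226; 60; 30; 235; 197; 47; 1; 222; 168;
      155; 214; 88; 139; 21; 64; 196; 231; 8; 35; 183; 81; 116; 127; 49; 52;
      103; 219; 157; 144; 90; 190; 23; 236; 77; 40; 10; 86; 185; 132; 118; 57;
      51; 224; 105; 149; 38; 74; 213; 120; 25; 166; 200; 91; 12; 137; 187; 62;
      241; 229; 174; 154; 107; 79; 161; 4; 215; 50; 148; 96; 202; 142; 14;
      188; 68; 113; 122; 159; 55; 84; 109; 9; 42; 176; 217; 101; 29; 147; 204;
      193; 16; 239; 191; 164; 3; 210; 178; 135; 111; 181; 165; 106; 98; 31;
      152; 198; 206; 123; 18; 169; 72; 94; 126; 19; 59; 65; 234; 232; 167; 36;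
      221; 82; 33; 128; 208; 53; 141; 220; 195; 24; 7; 70; 61; 237; 115; 162;
      48; 87; 223; 133; 156; 58; 89; 225; 143; 150; 76; 75; 130; 121; 184; 46;
      117; 92; 171; 138; 104; 63; 158; 230; 212; 34; 145; 80; 78; 5; 11; 172;
      186; 218; 119; 22; 173; 189; 227; 114; 39; 160; 93; 85; 26; 131; 201;
      177; 134; 102; 67; 27; 0; 194; 175; 240; 108; 44; 41; 211; 95; 136; 28;
      182; 203; 228; 15; 153; 69; 199; 2; 124; 56; 170; 110; 216; 43; 20; 97;
      66; 151; 233; 205; 37; 17; 83; 192; 129; 125; 54; 179; 100; 112; 146;
      45; 71; 99; 238; 32; 163];
  [:: 35; 87; 128; 88; 221; 89; 193; 211; 165; 212; 137; 92; 109; 93; 202; 94;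
      53; 95; 146; 96; 118; 218; 90; 98; 183; 220; 34; 100; 6; 222; 99; 223;
      192; 103; 164; 225; 15; 226; 229; 227; 80; 107; 173; 108; 145; 230; 117;
      231; 210; 232; 182; 233; 33; 113; 5; 114; 219; 115; 70; 237; 42; 238;
      14; 239; 228; 240; 200; 241; 172; 121; 144; 1; 116; 123; 209; 124; 181;
      4; 153; 126; 125; 127; 97; 7; 190; 8; 162; 130; 13; 131; 106; 11; 78;
      12; 171; 134; 143; 135; 236; 136; 208; 16; 180; 17; 152; 139; 3; 19;
      217; 141; 189; 142; 40; 22; 133; 23; 105; 24; 77; 25; 170; 147; 21; 148;
      235; 149; 207; 29; 58; 151; 30; 31; 2; 32; 216; 154; 67; 155; 160; 156;
      132; 36; 104; 37; 197; 38; 48; 39; 20; 161; 234; 41; 85; 163; 57; 43;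
      150; 44; 122; 45; 215; 46; 66; 47; 159; 169; 10; 49; 224; 50; 196; 51;
      168; 52; 140; 174; 112; 175; 205; 55; 56; 177; 28; 178; 0; 179; 214; 59;
      65; 60; 158; 61; 9; 62; 102; 184; 195; 64; 167; 186; 18; 187; 111; 188;
      204; 68; 176; 69; 27; 191; 120; 71; 213; 72; 185; 73; 157; 74; 129; 75;
      101; 76; 194; 198; 166; 199; 138; 79; 110; 201; 203; 81; 54; 82; 26; 83;
      119; 84; 91; 206; 63; 86]].

Definition columns290 : seq (seq nat) := [::
  [:: 186; 87; 178; 279; 170; 181; 17; 83; 154; 275; 1; 32; 138; 79; 130; 271;
      267; 28; 114; 220; 106; 122; 243; 169; 90; 71; 227; 118; 74; 20; 211;
      67; 58; 259; 50; 16; 187; 63; 179; 110; 171; 157; 163; 204; 10; 251; 2;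
      8; 139; 200; 131; 247; 123; 149; 115; 196; 107; 98; 99; 0; 91; 47; 228;
      239; 75; 141; 212; 188; 59; 235; 51; 282; 43; 184; 35; 231; 27; 278; 19;
      180; 156; 82; 148; 129; 285; 176; 132; 223; 269; 270; 116; 172; 253;
      219; 100; 266; 92; 168; 84; 215; 221; 117; 68; 164; 205; 66; 197; 113;
      44; 15; 36; 62; 173; 254; 165; 11; 12; 203; 4; 250; 286; 152; 133; 199;
      125; 101; 262; 3; 109; 195; 246; 97; 93; 289; 85; 46; 222; 238; 69; 140;
      61; 42; 53; 234; 190; 281; 182; 183; 29; 230; 21; 277; 158; 34; 150;
      226; 142; 128; 134; 175; 126; 77; 263; 124; 255; 26; 102; 73; 94; 120;
      86; 167; 78; 214; 70; 261; 207; 18; 54; 65; 191; 112; 38; 14; 30; 206;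
      22; 108; 159; 155; 6; 57; 143; 249; 280; 151; 127; 198; 264; 245; 256;
      147; 248; 49; 95; 241; 232; 288; 224; 45; 216; 237; 208; 284; 55; 41;
      192; 88; 39; 135; 31; 37; 23; 229; 160; 276; 7; 33; 144; 80; 136; 272;
      273; 174; 265; 76; 257; 268; 104; 25; 96; 72; 233; 119; 225; 166; 217;
      213; 64; 260; 56; 162; 193; 209; 40; 111; 177; 13; 24; 60; 161; 252;
      153; 9; 145; 201; 137; 103; 274; 5; 121; 52; 258; 244; 105; 146; 242;
      48; 89; 240; 81; 287; 218; 189; 210; 236; 202; 283; 194; 185];
  [:: 242; 28; 216; 217; 190; 116; 164; 160; 138; 204; 257; 248; 86; 147; 205;
      46; 34; 235; 153; 134; 272; 33; 246; 222; 220; 266; 49; 20; 23; 64; 287;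
      253; 261; 152; 90; 196; 209; 240; 38; 284; 12; 183; 131; 82; 105; 126;
      224; 170; 198; 214; 172; 113; 146; 157; 120; 56; 94; 100; 213; 289; 187;
      43; 16; 232; 280; 276; 109; 30; 83; 74; 202; 118; 176; 17; 150; 206;
      124; 250; 98; 149; 72; 193; 191; 237; 165; 281; 139; 35; 258; 79; 87;
      123; 61; 22; 180; 211; 154; 255; 273; 9; 102; 53; 221; 97; 195; 286; 24;
      185; 288; 84; 117; 128; 91; 27; 210; 71; 184; 115; 158; 14; 132; 203;
      106; 247; 225; 1; 54; 45; 173; 89; 2; 278; 121; 177; 95; 76; 69; 265;
      188; 19; 162; 63; 136; 252; 110; 151; 229; 50; 58; 239; 32; 283; 6; 182;
      270; 81; 99; 125; 73; 169; 47; 68; 166; 112; 140; 11; 114; 200; 233;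
      244; 207; 143; 181; 42; 10; 231; 129; 275; 103; 29; 77; 218; 51; 262;
      25; 161; 144; 60; 263; 249; 92; 3; 66; 192; 40; 236; 159; 135; 133; 179;
      107; 78; 226; 267; 55; 21; 174; 65; 148; 254; 122; 8; 241; 52; 70; 96;
      44; 285; 18; 39; 282; 228; 111; 127; 85; 171; 59; 215; 178; 259; 7; 13;
      271; 57; 245; 101; 219; 145; 48; 189; 167; 88; 141; 277; 260; 31; 234;
      75; 208; 264; 37; 163; 156; 62; 130; 251; 104; 5; 223; 194; 197; 238;
      26; 137; 0; 36; 119; 80; 93; 269; 212; 168; 41; 67; 15; 256; 279; 155;
      108; 199; 227; 243; 201; 142; 175; 186; 4; 230; 268; 274];
  [:: 195; 35; 68; 96; 231; 12; 249; 218; 122; 279; 140; 50; 13; 256; 176;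
      172; 49; 233; 212; 4; 230; 210; 103; 271; 121; 187; 139; 248; 157; 164;
      175; 225; 48; 141; 211; 57; 84; 263; 247; 179; 120; 95; 283; 156; 11;
      72; 29; 133; 192; 194; 65; 110; 83; 171; 101; 87; 119; 148; 282; 209;
      155; 125; 28; 186; 46; 102; 64; 163; 227; 79; 245; 285; 118; 201; 281;
      117; 154; 178; 27; 94; 190; 10; 208; 216; 81; 277; 99; 193; 262; 254;
      280; 170; 8; 86; 26; 147; 189; 63; 207; 124; 80; 40; 243; 246; 261; 162;
      134; 223; 152; 284; 25; 200; 43; 116; 61; 177; 224; 238; 97; 9; 115; 70;
      278; 131; 151; 47; 24; 108; 42; 169; 205; 85; 78; 1; 241; 62; 114; 268;
      132; 39; 150; 100; 168; 161; 41; 222; 59; 138; 77; 54; 240; 260; 258;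
      31; 276; 237; 149; 153; 167; 69; 185; 275; 58; 191; 221; 252; 239; 23;
      257; 229; 130; 145; 3; 206; 21; 267; 184; 38; 202; 244; 220; 15; 93; 76;
      111; 137; 274; 53; 2; 259; 165; 30; 183; 236; 56; 7; 219; 213; 92; 129;
      255; 45; 128; 106; 146; 22; 19; 228; 182; 144; 55; 60; 73; 266; 91; 37;
      109; 98; 272; 14; 0; 75; 18; 136; 181; 197; 199; 113; 217; 174; 90; 235;
      253; 6; 126; 67; 289; 273; 17; 44; 180; 250; 198; 166; 71; 82; 89; 143;
      107; 204; 270; 265; 288; 36; 16; 242; 34; 158; 52; 74; 215; 135; 88; 51;
      251; 112; 269; 173; 287; 234; 160; 5; 33; 66; 196; 127; 214; 188; 232;
      104; 105; 20; 123; 226; 286; 142; 159; 203; 32; 264]].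

Definition columns338 : seq (seq nat) := [::
  [:: 258; 39; 28; 198; 136; 188; 75; 9; 14; 168; 291; 327; 61; 317; 169; 307;
      277; 128; 47; 287; 155; 108; 94; 267; 33; 88; 310; 247; 80; 237; 19;
      227; 296; 48; 235; 38; 174; 197; 282; 18; 221; 177; 160; 167; 99; 157;
      207; 147; 146; 137; 85; 127; 193; 286; 132; 276; 240; 266; 179; 256;
      118; 77; 57; 67; 165; 226; 104; 216; 212; 206; 151; 27; 259; 186; 29; 7;
      306; 166; 76; 325; 184; 315; 123; 305; 62; 295; 170; 285; 109; 106; 217;
      96; 156; 255; 264; 245; 34; 66; 142; 56; 250; 46; 189; 36; 297; 26; 236;
      16; 175; 6; 114; 334; 222; 324; 330; 145; 269; 304; 208; 294; 316; 115;
      86; 274; 194; 95; 133; 254; 72; 244; 180; 65; 288; 224; 58; 45; 335;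
      204; 105; 25; 44; 15; 152; 5; 91; 164; 30; 154; 138; 144; 246; 134; 185;
      293; 124; 283; 63; 273; 171; 263; 279; 253; 49; 74; 326; 64; 265; 223;
      35; 213; 312; 203; 82; 24; 21; 183; 129; 4; 68; 163; 176; 322; 284; 143;
      54; 302; 162; 292; 101; 113; 209; 272; 148; 262; 87; 83; 195; 73; 303;
      232; 242; 53; 181; 43; 120; 202; 59; 192; 336; 182; 275; 3; 214; 331;
      153; 321; 261; 311; 31; 301; 308; 122; 78; 281; 17; 102; 125; 92; 233;
      251; 172; 241; 280; 231; 50; 52; 158; 42; 97; 201; 205; 191; 313; 12;
      252; 2; 22; 161; 299; 320; 69; 141; 8; 300; 116; 290; 55; 111; 332; 270;
      271; 260; 210; 81; 149; 71; 257; 230; 196; 220; 135; 41; 243; 200; 13;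
      190; 121; 11; 60; 1; 337; 329; 107; 150; 215; 140; 323; 130; 93; 289;
      32; 110; 309; 100; 248; 90; 187; 249; 126; 239; 234; 229; 173; 219; 112;
      40; 51; 199; 159; 20; 98; 10; 37; 0; 314; 328; 84; 318; 23; 139; 131;
      298; 70; 119; 178; 278; 117; 268; 225; 89; 333; 79; 103; 238; 211; 228;
      319; 218];
  [:: 322; 36; 65; 308; 146; 242; 58; 176; 139; 110; 51; 44; 301; 316; 213;
      81; 125; 15; 37; 118; 287; 221; 199; 155; 280; 258; 23; 192; 273; 295;
      185; 60; 266; 332; 178; 97; 90; 200; 171; 134; 252; 237; 164; 2; 245;
      274; 326; 208; 69; 311; 319; 76; 231; 179; 312; 113; 224; 216; 305; 150;
      48; 84; 129; 18; 210; 121; 291; 55; 203; 327; 115; 92; 196; 26; 108;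
      298; 20; 232; 270; 166; 182; 269; 94; 34; 6; 306; 256; 71; 337; 5; 249;
      277; 161; 211; 73; 314; 154; 248; 66; 13; 147; 116; 228; 50; 309; 153;
      52; 87; 133; 190; 45; 293; 126; 227; 207; 330; 119; 264; 31; 29; 281;
      132; 24; 235; 105; 0; 186; 272; 267; 206; 10; 140; 260; 243; 172; 8;
      253; 111; 334; 214; 77; 148; 158; 251; 239; 16; 320; 288; 63; 222; 144;
      325; 225; 259; 137; 193; 49; 296; 299; 230; 42; 333; 123; 98; 35; 201;
      285; 304; 28; 238; 109; 3; 21; 275; 271; 209; 14; 143; 95; 246; 7; 180;
      88; 283; 169; 217; 250; 151; 331; 254; 74; 19; 324; 122; 67; 56; 317;
      328; 229; 93; 310; 27; 53; 130; 303; 64; 46; 336; 127; 101; 39; 204;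
      120; 138; 32; 72; 282; 175; 194; 278; 106; 212; 187; 315; 99; 80; 11;
      183; 261; 117; 173; 220; 85; 323; 335; 257; 78; 191; 159; 294; 240; 59;
      321; 162; 233; 96; 145; 30; 57; 302; 307; 236; 219; 170; 131; 104; 43;
      38; 124; 141; 205; 75; 286; 9; 198; 112; 279; 215; 22; 149; 103; 83;
      184; 17; 265; 289; 177; 54; 89; 157; 1; 91; 82; 25; 163; 297; 244; 62;
      156; 165; 68; 268; 318; 33; 61; 136; 142; 70; 223; 4; 135; 107; 47; 41;
      128; 313; 40; 247; 290; 12; 202; 284; 114; 218; 195; 152; 276; 86; 188;
      189; 100; 292; 181; 226; 262; 160; 174; 263; 255; 197; 167; 300; 79;
      234; 329; 168; 241; 102];
  [:: 46; 257; 262; 250; 140; 243; 187; 236; 234; 60; 281; 53; 328; 215; 206;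
      208; 253; 32; 131; 194; 178; 18; 56; 11; 103; 4; 319; 335; 28; 159; 244;
      152; 291; 314; 169; 307; 47; 300; 94; 124; 310; 117; 188; 110; 66; 272;
      282; 265; 329; 89; 207; 82; 254; 75; 301; 237; 179; 61; 226; 54; 273;
      216; 151; 209; 198; 33; 245; 195; 292; 19; 170; 12; 217; 174; 95; 167;
      311; 160; 20; 322; 67; 146; 114; 139; 161; 132; 39; 125; 255; 118; 302;
      111; 180; 104; 227; 266; 105; 259; 321; 83; 199; 76; 246; 238; 293; 62;
      171; 224; 218; 48; 96; 41; 312; 34; 190; 196; 68; 189; 284; 182; 162;
      175; 40; 168; 256; 330; 134; 154; 181; 316; 59; 309; 275; 133; 153; 126;
      200; 119; 78; 112; 294; 274; 172; 98; 219; 260; 97; 84; 144; 77; 191;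
      70; 69; 63; 116; 225; 163; 49; 210; 42; 88; 35; 135; 197; 13; 21; 229;
      14; 276; 7; 323; 0; 201; 331; 79; 155; 295; 317; 173; 141; 51; 303; 267;
      296; 145; 120; 23; 113; 239; 106; 286; 99; 164; 261; 211; 85; 258; 247;
      136; 240; 183; 233; 230; 57; 277; 50; 324; 43; 202; 36; 80; 29; 127; 22;
      5; 184; 221; 8; 268; 1; 315; 332; 24; 325; 71; 318; 287; 142; 334; 304;
      212; 297; 90; 121; 306; 283; 15; 107; 231; 269; 278; 93; 156; 86; 203;
      248; 81; 72; 128; 65; 6; 58; 222; 220; 100; 213; 147; 37; 25; 30; 241;
      192; 288; 185; 166; 9; 44; 2; 91; 333; 138; 326; 16; 150; 232; 143; 279;
      305; 157; 298; 204; 122; 251; 115; 129; 108; 176; 270; 223; 263; 101;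
      87; 148; 249; 26; 242; 73; 235; 289; 228; 336; 52; 214; 45; 92; 38; 308;
      31; 17; 193; 64; 186; 280; 10; 158; 3; 205; 165; 252; 327; 299; 320;
      177; 313; 55; 137; 271; 130; 149; 123; 27; 285; 74; 109; 290; 102; 337;
      264]].

Definition difference_certificates : seq (nat * seq (seq nat)) :=
  [:: (50, columns50); (98, columns98); (170, columns170);
      (242, columns242); (290, columns290); (338, columns338)].

Lemma difference_certificates_valid :
  all (fun c => [&& 1 < c.1, size c.2 == 3 & difference_columns c.1 c.2])
      difference_certificates.
Proof. by vm_compute. Qed.

Theorem mainTheorem9 :
  forall n : nat, n \in [:: 50; 98; 170; 242; 290; 338]%N ->
    exists Q : 'M['Z_n]_(n.+1, 4),
      is_DCA Q /\ normalized_DCA Q /\ DCA_P1 Q /\ DCA_P2 Q.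
Proof.
move=> n; have -> : [:: 50; 98; 170; 242; 290; 338]%N =
                   map fst difference_certificates by [].
case/mapP => [[m cols] cert_in ->] /=.
have /and3P[m_gt1 /eqP size_cols cols_ok] :=
  allP difference_certificates_valid _ cert_in.
exact: difference_columns_DCA m_gt1 size_cols cols_ok.
Qed.
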